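(* Let $N\ge 3$, $G>0$, $m_1,\dots,m_N>0$, let $I$ be a nondegenerate interval, and let $r_1,\dots,r_N:I\to\mathbb{R}^3$ be $C^2$ functions with $r_j(t)\neq r_k(t)$ for all $t\in I$, $j\neq k$, satisfying for all $1\le j<k\le N$ $$(r_j-r_k)''=G\sum_{\substack{i=1\\ i\neq j}}^{N}\frac{m_i(r_i-r_j)}{\|r_i-r_j\|^3}-G\sum_{\substack{i=1\\ i\neq k}}^{N}\frac{m_i(r_i-r_k)}{\|r_i-r_k\|^3}.$$ Then there are two distinct pairs $(j_1,j_2)\neq(j_3,j_4)$ with $1\le j_1<j_2\le N$ and $1\le j_3<j_4\le N$ such that neither $(r_{j_1}-r_{j_2})''$ nor $(r_{j_3}-r_{j_4})''$ is identically $\vec 0$ on $I$.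
   Context: $\|\cdot\|$ is the Euclidean norm on $\mathbb{R}^3$. *)

From Stdlib Require Import Reals Lra.
From Coquelicot Require Import Coquelicot.
Open Scope R_scope.

Definition is_interval (I : R -> Prop) : Prop :=
  forall a b x, I a -> I b -> a <= x <= b -> I x.

Definition nondegenerate (I : R -> Prop) : Prop :=
  exists a b, I a /\ I b /\ a < b.

(* f has derivative f' at every point of I, relative to I
   (one-sided at endpoints belonging to I). *)
Definition has_derive_on (I : R -> Prop) (f f' : R -> R) : Prop :=
  forall t, I t ->
    filterlim (fun h => (f (t + h) - f t) / h)
      (within (fun h => h <> 0 /\ I (t + h)) (locally 0))
      (locally (f' t)).

Definition continuous_on_I (I : R -> Prop) (f : R -> R) : Prop :=
  forall t, I t -> filterlim f (within I (locally t)) (locally (f t)).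

(* Positions: r j c t is the c-th coordinate (c < 3) of body j (j < N)
   at time t.  Euclidean distance between bodies i and j at time t. *)
Definition dist3 (r : nat -> nat -> R -> R) (i j : nat) (t : R) : R :=
  sqrt ((r i 0%nat t - r j 0%nat t)^2 + (r i 1%nat t - r j 1%nat t)^2
        + (r i 2%nat t - r j 2%nat t)^2).

Definition accel (N : nat) (G : R) (m : nat -> R) (r : nat -> nat -> R -> R)
  (j c : nat) (t : R) : R :=
  G * sum_f_R0 (fun i => if Nat.eq_dec i j then 0
                         else m i * (r i c t - r j c t) / (dist3 r i j t ^ 3))
        (N - 1).

(* Fix a time t0 in I.  In every coordinate the acceleration of body j is G
   times a weighted Laplacian  sum_(i <> j) w_ij (x_i - x_j)  with positive
   weights, so by the discrete maximum principle it is <= 0 at a body with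
   maximal coordinate and >= 0 at one with minimal coordinate.  If all
   accelerations were equal, both would vanish and all bodies would share
   every coordinate, contradicting that they are distinct.  So two bodies j, k
   have different accelerations, and any third body l has an acceleration
   different from that of j or of k: this gives two distinct pairs whose
   relative accelerations are nonzero at t0. *)
From Stdlib Require Import Reals Lra Lia Classical.
From Coquelicot Require Import Coquelicot.
Open Scope R_scope.

Lemma sum_f_R0_nonpos (u : nat -> R) n :
  (forall i, (i <= n)%nat -> u i <= 0) -> sum_f_R0 u n <= 0.
Proof.
  intros Hu. rewrite <- (Rmult_0_l (INR (S n))), <- sum_cte.
  exact (sum_Rle u (fun _ => 0) n Hu).
Qed.

Lemma sum_f_R0_nonneg (u : nat -> R) n :
  (forall i, (i <= n)%nat -> 0 <= u i) -> 0 <= sum_f_R0 u n.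
Proof.
  intros Hu. rewrite <- (Rmult_0_l (INR (S n))), <- sum_cte.
  exact (sum_Rle (fun _ => 0) u n Hu).
Qed.

Lemma sum_f_R0_nonpos_eq0 (u : nat -> R) n :
  (forall i, (i <= n)%nat -> u i <= 0) -> sum_f_R0 u n = 0 ->
  forall i, (i <= n)%nat -> u i = 0.
Proof.
  induction n as [|n IH]; intros Hu Hs i Hi; simpl in Hs.
  - replace i with 0%nat by lia; exact Hs.
  - assert (Hlast : u (S n) <= 0) by (apply Hu; lia).
    assert (Hinit : sum_f_R0 u n <= 0)
      by (apply sum_f_R0_nonpos; intros; apply Hu; lia).
    destruct (Nat.eq_dec i (S n)) as [->|Hne]; [lra|].
    apply IH; [intros; apply Hu; lia | lra | lia].
Qed.

Lemma exists_argmax (f : nat -> R) n :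
  exists j, (j <= n)%nat /\ forall i, (i <= n)%nat -> f i <= f j.
Proof.
  induction n as [|n [j [Hj Hmax]]].
  - exists 0%nat; split; [lia|]; intros i Hi; replace i with 0%nat by lia; lra.
  - destruct (Rle_dec (f (S n)) (f j)) as [Hle|Hgt].
    + exists j; split; [lia|]; intros i Hi.
      destruct (Nat.eq_dec i (S n)) as [->|]; [lra|]; apply Hmax; lia.
    + exists (S n); split; [lia|]; intros i Hi.
      destruct (Nat.eq_dec i (S n)) as [->|]; [lra|].
      specialize (Hmax i ltac:(lia)); lra.
Qed.

Definition weighted_laplacian (n : nat) (w : nat -> nat -> R) (x : nat -> R)
  (j : nat) : R :=
  sum_f_R0 (fun i => if Nat.eq_dec i j then 0 else w i j * (x i - x j)) n.

Section MaximumPrinciple.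

Variables (n : nat) (w : nat -> nat -> R) (x : nat -> R).
Hypothesis w_pos : forall i j, (i <= n)%nat -> (j <= n)%nat -> i <> j -> 0 < w i j.

Lemma weighted_laplacian_term_le0 j :
  (j <= n)%nat -> (forall i, (i <= n)%nat -> x i <= x j) ->
  forall i, (i <= n)%nat ->
  (if Nat.eq_dec i j then 0 else w i j * (x i - x j)) <= 0.
Proof.
  intros Hj Hmax i Hi.
  destruct (Nat.eq_dec i j) as [|Hij]; [lra|].
  specialize (w_pos i j Hi Hj Hij); specialize (Hmax i Hi); nra.
Qed.

Lemma weighted_laplacian_at_max_le0 j :
  (j <= n)%nat -> (forall i, (i <= n)%nat -> x i <= x j) ->
  weighted_laplacian n w x j <= 0.
Proof.
  intros Hj Hmax.
  exact (sum_f_R0_nonpos _ n (weighted_laplacian_term_le0 j Hj Hmax)).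
Qed.

Lemma weighted_laplacian_at_min_ge0 j :
  (j <= n)%nat -> (forall i, (i <= n)%nat -> x j <= x i) ->
  0 <= weighted_laplacian n w x j.
Proof.
  intros Hj Hmin. apply sum_f_R0_nonneg; intros i Hi.
  destruct (Nat.eq_dec i j) as [|Hij]; [lra|].
  specialize (w_pos i j Hi Hj Hij); specialize (Hmin i Hi); nra.
Qed.

Lemma weighted_laplacian_at_max_eq0 j :
  (j <= n)%nat -> (forall i, (i <= n)%nat -> x i <= x j) ->
  weighted_laplacian n w x j = 0 -> forall i, (i <= n)%nat -> x i = x j.
Proof.
  intros Hj Hmax H0 i Hi.
  destruct (Nat.eq_dec i j) as [->|Hij]; [reflexivity|].
  assert (Hterm := sum_f_R0_nonpos_eq0 _ n
    (weighted_laplacian_term_le0 j Hj Hmax) H0 i Hi).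
  simpl in Hterm. destruct (Nat.eq_dec i j) as [|_]; [contradiction|].
  specialize (w_pos i j Hi Hj Hij).
  apply Rmult_integral in Hterm as [|]; lra.
Qed.

Lemma weighted_laplacian_const_eq s :
  (forall j, (j <= n)%nat -> weighted_laplacian n w x j = s) ->
  forall i, (i <= n)%nat -> x i = x 0%nat.
Proof.
  intros Hs.
  destruct (exists_argmax x n) as [jmax [Hjmax Hmax]].
  destruct (exists_argmax (fun i => - x i) n) as [jmin [Hjmin Hmin]].
  assert (Hle := weighted_laplacian_at_max_le0 jmax Hjmax Hmax).
  assert (Hge := weighted_laplacian_at_min_ge0 jmin Hjmin
                   ltac:(intros i Hi; specialize (Hmin i Hi); lra)).
  rewrite Hs in Hle, Hge by assumption.
  assert (Hflat := weighted_laplacian_at_max_eq0 jmax Hjmax Hmax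
                     ltac:(rewrite Hs by assumption; lra)).
  intros i Hi. rewrite (Hflat i Hi), (Hflat 0%nat ltac:(lia)). reflexivity.
Qed.

End MaximumPrinciple.

Lemma dist3_pos r i j t :
  (exists c, (c < 3)%nat /\ r i c t <> r j c t) -> 0 < dist3 r i j t.
Proof.
  intros [c [Hc Hne]]. unfold dist3. apply sqrt_lt_R0.
  assert (Hsq : 0 < (r i c t - r j c t) ^ 2) by (apply pow2_gt_0; lra).
  pose proof (pow2_ge_0 (r i 0%nat t - r j 0%nat t)).
  pose proof (pow2_ge_0 (r i 1%nat t - r j 1%nat t)).
  pose proof (pow2_ge_0 (r i 2%nat t - r j 2%nat t)).
  assert (Hc3 : c = 0%nat \/ c = 1%nat \/ c = 2%nat) by lia.
  destruct Hc3 as [-> | [-> | ->]]; lra.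
Qed.

Lemma accel_weighted_laplacian N G m r j c t :
  accel N G m r j c t =
  G * weighted_laplacian (N - 1) (fun i k => m i / dist3 r i k t ^ 3)
        (fun i => r i c t) j.
Proof.
  unfold accel, weighted_laplacian. f_equal. apply sum_eq; intros i _.
  destruct (Nat.eq_dec i j); [reflexivity|]. unfold Rdiv; ring.
Qed.

Lemma accel_not_all_equal N G m r t :
  (2 <= N)%nat -> 0 < G -> (forall i, (i < N)%nat -> 0 < m i) ->
  (forall j k, (j < N)%nat -> (k < N)%nat -> j <> k ->
     exists c, (c < 3)%nat /\ r j c t <> r k c t) ->
  exists j k c, (j < N)%nat /\ (k < N)%nat /\ (c < 3)%nat /\
    accel N G m r j c t <> accel N G m r k c t.
Proof.
  intros HN HG Hm Hdistinct. apply NNPP; intro Hall.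
  set (w := fun i k => m i / dist3 r i k t ^ 3).
  assert (Hcoincide : forall c i, (c < 3)%nat -> (i < N)%nat ->
            r i c t = r 0%nat c t).
  { intros c i Hc Hi.
    apply (weighted_laplacian_const_eq (N - 1) w (fun i => r i c t))
      with (s := weighted_laplacian (N - 1) w (fun i => r i c t) 0%nat); [| |lia].
    - intros i' j' Hi' Hj' Hij. apply Rdiv_lt_0_compat; [apply Hm; lia|].
      apply pow_lt, dist3_pos, Hdistinct; lia.
    - intros j Hj.
      assert (Hacc : accel N G m r j c t = accel N G m r 0%nat c t).
      { apply NNPP; intro Hne. apply Hall. exists j, 0%nat, c.
        repeat split; auto; lia. }
      rewrite !accel_weighted_laplacian in Hacc.
      apply (Rmult_eq_reg_l G); [exact Hacc | lra]. }
  destruct (Hdistinct 0%nat 1%nat ltac:(lia) ltac:(lia) ltac:(lia))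
    as [c [Hc Hne]].
  apply Hne. symmetry. apply Hcoincide; lia.
Qed.

Lemma sorted_pair_neq (a : nat -> R) p q :
  a p <> a q -> (Nat.min p q < Nat.max p q)%nat /\
                a (Nat.min p q) <> a (Nat.max p q).
Proof.
  intros Hpq. destruct (Nat.lt_total p q) as [Hlt | [<- | Hgt]].
  - rewrite Nat.min_l, Nat.max_r by lia. auto.
  - contradiction.
  - rewrite Nat.min_r, Nat.max_l by lia. auto.
Qed.

(* A nonconstant function on {0, ..., N-1} with N >= 3 separates at least two
   pairs: a third point l differs in value from one of the two given points. *)
Lemma two_pairs_neq (N : nat) (a : nat -> R) j k :
  (3 <= N)%nat -> (j < N)%nat -> (k < N)%nat -> a j <> a k ->
  exists j1 j2 j3 j4,
    (j1 < j2)%nat /\ (j2 < N)%nat /\ (j3 < j4)%nat /\ (j4 < N)%nat /\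
    (j1, j2) <> (j3, j4) /\ a j1 <> a j2 /\ a j3 <> a j4.
Proof.
  intros HN Hj Hk Hjk.
  assert (Hneq : j <> k) by (intros ->; contradiction).
  assert (Hthird : exists l, (l < 3)%nat /\ l <> j /\ l <> k).
  { destruct (Nat.eq_dec j 0); destruct (Nat.eq_dec k 0);
      destruct (Nat.eq_dec j 1); destruct (Nat.eq_dec k 1);
      first [exists 0%nat; lia | exists 1%nat; lia | exists 2%nat; lia]. }
  destruct Hthird as [l [Hl [Hlj Hlk]]].
  destruct (sorted_pair_neq a j k Hjk) as [Hs1 Hv1].
  destruct (Req_dec (a l) (a j)) as [Hlj' | Hlj'].
  - assert (Hlk' : a l <> a k) by (rewrite Hlj'; exact Hjk).
    destruct (sorted_pair_neq a l k Hlk') as [Hs2 Hv2].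
    exists (Nat.min j k), (Nat.max j k), (Nat.min l k), (Nat.max l k).
    repeat split; auto; try lia.
    intros Heq; injection Heq; lia.
  - destruct (sorted_pair_neq a l j Hlj') as [Hs2 Hv2].
    exists (Nat.min j k), (Nat.max j k), (Nat.min l j), (Nat.max l j).
    repeat split; auto; try lia.
    intros Heq; injection Heq; lia.
Qed.

Theorem corollary2 (N : nat) (G : R) (m : nat -> R) (I : R -> Prop)
  (r r1 r2 : nat -> nat -> R -> R) :
  (3 <= N)%nat ->
  0 < G ->
  (forall i, (i < N)%nat -> 0 < m i) ->
  is_interval I -> nondegenerate I ->
  (forall j c, (j < N)%nat -> (c < 3)%nat ->
     has_derive_on I (r j c) (r1 j c) /\
     has_derive_on I (r1 j c) (r2 j c) /\
     continuous_on_I I (r2 j c)) ->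
  (forall t j k, I t -> (j < N)%nat -> (k < N)%nat -> j <> k ->
     exists c, (c < 3)%nat /\ r j c t <> r k c t) ->
  (forall j k c t, (j < k)%nat -> (k < N)%nat -> (c < 3)%nat -> I t ->
     r2 j c t - r2 k c t = accel N G m r j c t - accel N G m r k c t) ->
  exists j1 j2 j3 j4,
    (j1 < j2)%nat /\ (j2 < N)%nat /\ (j3 < j4)%nat /\ (j4 < N)%nat /\
    (j1, j2) <> (j3, j4) /\
    (exists t c, I t /\ (c < 3)%nat /\ r2 j1 c t - r2 j2 c t <> 0) /\
    (exists t c, I t /\ (c < 3)%nat /\ r2 j3 c t - r2 j4 c t <> 0).
Proof.
  intros HN HG Hm _ [t0 [_ [Ht0 _]]] _ Hdistinct Hmotion.
  destruct (accel_not_all_equal N G m r t0 ltac:(lia) HG Hm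
              (fun j k => Hdistinct t0 j k Ht0))
    as [j [k [c [Hj [Hk [Hc Hjk]]]]]].
  destruct (two_pairs_neq N (fun i => accel N G m r i c t0) j k HN Hj Hk Hjk)
    as [j1 [j2 [j3 [j4 [H12 [H2 [H34 [H4 [Hpairs [Hv12 Hv34]]]]]]]]]].
  exists j1, j2, j3, j4. repeat split; try assumption.
  - exists t0, c. rewrite Hmotion by assumption. split; [|split]; auto; lra.
  - exists t0, c. rewrite Hmotion by assumption. split; [|split]; auto; lra.
Qed.
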